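(* Let $n\ge1$ and let $\Phi:\mathbb{R}^{n+1}\to[0,+\infty)$ be a norm, and set $\psi(\widehat\xi):=\Phi(\widehat\xi,0)$ for $\widehat\xi\in\mathbb{R}^n$. Then $\Phi$ is partially monotone if and only if there exists a positively one-homogeneous convex function $\omega:[0,+\infty)\times[0,+\infty)\to[0,+\infty)$ with $\omega(1,0)>0$, $\omega(0,1)>0$ and $\omega(s_1,s_2)\le\omega(t_1,t_2)$ whenever $0\le s_i\le t_i$, $i=1,2$, such that $\Phi(\widehat\xi,\xi_{n+1})=\omega(\psi(\widehat\xi),|\xi_{n+1}|)$ for all $(\widehat\xi,\xi_{n+1})\in\mathbb{R}^{n+1}$.
   Context: A norm on $\mathbb{R}^m$ is a convex function $\Psi:\mathbb{R}^m\to[0,+\infty)$ with $\Psi(\lambda\xi)=|\lambda|\Psi(\xi)$ and $\Psi(\xi)\ge c|\xi|$ for some $c>0$. The norm $\Phi$ on $\mathbb{R}^{n+1}$ is partially monotone if for all $(\widehat\xi,\xi_{n+1}),(\widehat\eta,\eta_{n+1})\in\mathbb{R}^{n+1}$: $\Phi(\widehat\xi,0)\le\Phi(\widehat\eta,0)$ and $\Phi(0,\xi_{n+1})\le\Phi(0,\eta_{n+1})$ imply $\Phi(\widehat\xi,\xi_{n+1})\le\Phi(\widehat\eta,\eta_{n+1})$. *)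

From HB Require Import structures.
From mathcomp Require Export all_boot all_order all_algebra.
From mathcomp Require Export reals.
Set Implicit Arguments. Unset Strict Implicit. Unset Printing Implicit Defensive.
Import Order.TTheory GRing.Theory Num.Theory.
Local Open Scope ring_scope.

(* Euclidean norm |xi| on R^m, with R^m represented as row vectors 'rV_m. *)
Definition eucl_norm (R : realType) (m : nat) (v : 'rV[R]_m) : R :=
  Num.sqrt (\sum_(i < m) (v 0 i) ^+ 2).

Definition is_norm (R : realType) (m : nat) (Psi : 'rV[R]_m -> R) : Prop :=
  [/\ (forall x, 0 <= Psi x),
      (forall (x y : 'rV[R]_m) (t : R), 0 <= t -> t <= 1 ->
          Psi (t *: x + (1 - t) *: y) <= t * Psi x + (1 - t) * Psi y),
      (forall (l : R) x, Psi (l *: x) = `|l| * Psi x) &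
      (exists2 c : R, 0 < c & forall x, c * eucl_norm x <= Psi x)].

Definition pt (R : realType) (n : nat) (xh : 'rV[R]_n) (s : R) : 'rV[R]_(n + 1) :=
  row_mx xh (\row_(i < 1) s).

Definition partially_monotone (R : realType) (n : nat)
  (Phi : 'rV[R]_(n + 1) -> R) : Prop :=
  forall (xh yh : 'rV[R]_n) (s t : R),
    Phi (pt xh 0) <= Phi (pt yh 0) ->
    Phi (pt 0 s) <= Phi (pt 0 t) ->
    Phi (pt xh s) <= Phi (pt yh t).

(* Properties of omega : [0,+oo) x [0,+oo) -> [0,+oo), represented as R -> R -> R
   with all conditions imposed on the closed quadrant only. *)
Definition quadrant_ok (R : realType) (omega : R -> R -> R) : Prop :=
  [/\ (forall s1 s2, 0 <= s1 -> 0 <= s2 -> 0 <= omega s1 s2),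
      (forall l s1 s2, 0 < l -> 0 <= s1 -> 0 <= s2 ->
          omega (l * s1) (l * s2) = l * omega s1 s2),
      (forall s1 s2 t1 t2 a, 0 <= s1 -> 0 <= s2 -> 0 <= t1 -> 0 <= t2 ->
          0 <= a -> a <= 1 ->
          omega (a * s1 + (1 - a) * t1) (a * s2 + (1 - a) * t2)
            <= a * omega s1 s2 + (1 - a) * omega t1 t2),
      0 < omega 1 0 /\ 0 < omega 0 1 &
      (forall s1 s2 t1 t2, 0 <= s1 -> s1 <= t1 -> 0 <= s2 -> s2 <= t2 ->
          omega s1 s2 <= omega t1 t2)].

From HB Require Import structures.
From mathcomp Require Import all_boot all_order all_algebra reals.
Set Implicit Arguments. Unset Strict Implicit. Unset Printing Implicit Defensive.
Import Order.TTheory GRing.Theory Num.Theory.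
Local Open Scope ring_scope.

(* The profile [omega] is read off along one fixed ray: with [A = Phi (e, 0)]
   for any nonzero [e], set [omega (s1, s2) = Phi ((s1 / A) e, s2)].  Since
   [Phi ((s1 / A) e, 0) = s1], partial monotonicity applied in both directions
   to [xh] and [(psi xh / A) e] gives [Phi (xh, s) = omega (psi xh, |s|)].
   Homogeneity and convexity of [omega] come from those of [Phi] because
   [(s1, s2) |-> ((s1 / A) e, s2)] is linear, and monotonicity of [omega] is
   partial monotonicity again.  Conversely, [Phi (0, s) = |s| Phi (0, 1)], so
   the hypotheses of partial monotonicity are exactly the coordinatewise
   inequalities under which a monotone [omega] compares. *)

Lemma eucl_norm_gt0 (R : realType) (m : nat) (v : 'rV[R]_m) (i : 'I_m) :
  v 0 i != 0 -> 0 < eucl_norm v.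
Proof.
move=> vi_neq0; rewrite /eucl_norm sqrtr_gt0 (bigD1 i) //=.
have vi2_gt0 : 0 < v 0 i ^+ 2 by rewrite lt_def sqrf_eq0 vi_neq0 sqr_ge0.
by apply: (lt_le_trans vi2_gt0); rewrite lerDl sumr_ge0 // => j _; rewrite sqr_ge0.
Qed.

Lemma is_norm_gt0 (R : realType) (m : nat) (Psi : 'rV[R]_m -> R)
    (v : 'rV[R]_m) (i : 'I_m) :
  is_norm Psi -> v 0 i != 0 -> 0 < Psi v.
Proof.
case=> _ _ _ [c c_gt0 Psi_ge] vi_neq0.
by apply: lt_le_trans (Psi_ge v); rewrite mulr_gt0 //; exact: eucl_norm_gt0 vi_neq0.
Qed.

Lemma scale_pt (R : realType) (n : nat) (k : R) (x : 'rV[R]_n) (s : R) :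
  k *: pt x s = pt (k *: x) (k * s).
Proof. by rewrite /pt scale_row_mx; congr row_mx; apply/rowP => i; rewrite !mxE. Qed.

Lemma add_pt (R : realType) (n : nat) (x y : 'rV[R]_n) (s t : R) :
  pt x s + pt y t = pt (x + y) (s + t).
Proof. by rewrite /pt add_row_mx; congr row_mx; apply/rowP => i; rewrite !mxE. Qed.

Section PartiallyMonotoneNorm.

Variables (R : realType) (n : nat) (Phi : 'rV[R]_(n + 1) -> R).
Hypothesis normPhi : is_norm Phi.

Lemma Phi_ge0 (v : 'rV[R]_(n + 1)) : 0 <= Phi v.
Proof. by case: normPhi. Qed.

Lemma PhiZ (k : R) (v : 'rV[R]_(n + 1)) : Phi (k *: v) = `|k| * Phi v.
Proof. by case: normPhi. Qed.

Lemma Phi_pt_hatZ (k : R) (x : 'rV[R]_n) : Phi (pt (k *: x) 0) = `|k| * Phi (pt x 0).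
Proof. by rewrite -PhiZ scale_pt mulr0. Qed.

Lemma Phi_pt0 (s : R) : Phi (pt 0 s) = `|s| * Phi (pt 0 1).
Proof. by rewrite -PhiZ scale_pt scaler0 mulr1. Qed.

Lemma Phi_pt01_gt0 : 0 < Phi (pt 0 1).
Proof.
by apply: (is_norm_gt0 (i := rshift n (0 : 'I_1)) normPhi); rewrite /pt row_mxEr mxE oner_neq0.
Qed.

Lemma Phi_pt0_le (s t : R) : (Phi (pt 0 s) <= Phi (pt 0 t)) = (`|s| <= `|t|).
Proof. by rewrite (Phi_pt0 s) (Phi_pt0 t) ler_pM2r // Phi_pt01_gt0. Qed.

Lemma Phi_pt0_norm (s : R) : Phi (pt 0 `|s|) = Phi (pt 0 s).
Proof. by rewrite (Phi_pt0 s) (Phi_pt0 `|s|) normr_id. Qed.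

Section Profile.

Variable e : 'rV[R]_n.
Hypothesis Phi_e_gt0 : 0 < Phi (pt e 0).

Definition profile (s1 s2 : R) : R := Phi (pt ((s1 / Phi (pt e 0)) *: e) s2).

Lemma profile_hat (s1 : R) : 0 <= s1 -> Phi (pt ((s1 / Phi (pt e 0)) *: e) 0) = s1.
Proof.
move=> s1_ge0; rewrite Phi_pt_hatZ ger0_norm ?divfK ?gt_eqF //.
by rewrite divr_ge0 // ltW.
Qed.

Lemma profileZ (l s1 s2 : R) : 0 <= l -> profile (l * s1) (l * s2) = l * profile s1 s2.
Proof.
by move=> l_ge0; rewrite /profile -[in RHS](ger0_norm l_ge0) -PhiZ scale_pt scalerA mulrA.
Qed.

Lemma profile_convex (s1 s2 t1 t2 a : R) : 0 <= a -> a <= 1 ->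
  profile (a * s1 + (1 - a) * t1) (a * s2 + (1 - a) * t2)
    <= a * profile s1 s2 + (1 - a) * profile t1 t2.
Proof.
case: normPhi => _ Phi_convex _ _ a_ge0 a_le1; rewrite /profile.
have -> : pt (((a * s1 + (1 - a) * t1) / Phi (pt e 0)) *: e) (a * s2 + (1 - a) * t2)
    = a *: pt ((s1 / Phi (pt e 0)) *: e) s2 + (1 - a) *: pt ((t1 / Phi (pt e 0)) *: e) t2.
  by rewrite !scale_pt add_pt !scalerA -scalerDl mulrDl !mulrA.
exact: Phi_convex.
Qed.

Hypothesis pmPhi : partially_monotone Phi.

Lemma profile_monotone (s1 s2 t1 t2 : R) : 0 <= s1 -> s1 <= t1 -> 0 <= s2 -> s2 <= t2 ->
  profile s1 s2 <= profile t1 t2.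
Proof.
move=> s1_ge0 s1_le s2_ge0 s2_le; apply: pmPhi.
  by rewrite !profile_hat // (le_trans s1_ge0).
by rewrite Phi_pt0_le !ger0_norm // (le_trans s2_ge0).
Qed.

Lemma profile_quadrant_ok : quadrant_ok profile.
Proof.
split=> [s1 s2 _ _|l s1 s2 l_gt0 _ _|s1 s2 t1 t2 a _ _ _ _||].
- exact: Phi_ge0.
- exact/profileZ/ltW.
- exact: profile_convex.
- split; first by rewrite /profile profile_hat ?ltr01.
  by rewrite /profile mul0r scale0r Phi_pt0 normr1 mul1r Phi_pt01_gt0.
- exact: profile_monotone.
Qed.

Lemma Phi_profile (xh : 'rV[R]_n) (s : R) : Phi (pt xh s) = profile (Phi (pt xh 0)) `|s|.
Proof.
have hat_eq : Phi (pt ((Phi (pt xh 0) / Phi (pt e 0)) *: e) 0) = Phi (pt xh 0).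
  exact/profile_hat/Phi_ge0.
by apply/le_anti/andP; split; apply: pmPhi; rewrite ?hat_eq ?Phi_pt0_norm.
Qed.

End Profile.

Lemma partially_monotone_profile (omega : R -> R -> R) :
  (forall s1 s2 t1 t2, 0 <= s1 -> s1 <= t1 -> 0 <= s2 -> s2 <= t2 ->
     omega s1 s2 <= omega t1 t2) ->
  (forall xh s, Phi (pt xh s) = omega (Phi (pt xh 0)) `|s|) ->
  partially_monotone Phi.
Proof.
move=> omega_monotone Phi_omega xh yh s t xh_le st_le.
rewrite (Phi_omega xh s) (Phi_omega yh t) omega_monotone ?Phi_ge0 //.
by rewrite -Phi_pt0_le.
Qed.

End PartiallyMonotoneNorm.

Theorem propositionA5 (R : realType) (n : nat) (hn : (1 <= n)%N)
  (Phi : 'rV[R]_(n + 1) -> R) (hPhi : is_norm Phi) :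
  partially_monotone Phi <->
  exists omega : R -> R -> R,
    quadrant_ok omega /\
    forall (xh : 'rV[R]_n) (s : R), Phi (pt xh s) = omega (Phi (pt xh 0)) `|s|.
Proof.
split=> [pmPhi | [omega [[_ _ _ _ omega_monotone] Phi_omega]]].
- pose e : 'rV[R]_n := const_mx 1.
  have Phi_e_gt0 : 0 < Phi (pt e 0).
    apply: (is_norm_gt0 (i := lshift 1 (Ordinal hn)) hPhi).
    by rewrite /pt row_mxEl mxE oner_neq0.
  exists (profile Phi e); split.
  + exact: profile_quadrant_ok.
  + exact: Phi_profile.
- exact: partially_monotone_profile omega_monotone Phi_omega.
Qed.
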